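(* Let $G$ be a group with a surjective homomorphism $f\colon G\to\mathbb{Z}$ with kernel $N$. If $N$ is not finitely generated, then no lexicographic left-order on $G$ where $\mathbb{Z}$ leads is regular.
   Context: A positive cone of a group $H$ is a subsemigroup $P$ with $H=P\sqcup P^{-1}\sqcup\{1\}$. A lexicographic left-order on $G$ where $\mathbb{Z}$ leads is one with positive cone $f^{-1}(P_{\mathbb{Z}})\cup P_N$ for a positive cone $P_{\mathbb{Z}}$ of $\mathbb{Z}$ and a positive cone $P_N$ of $N$. A left-order is regular if $G$ is finitely generated and there are a finite set $X$, a surjective monoid homomorphism $\pi\colon X^*\to G$ and a language $\mathcal{L}\subseteq X^*$ accepted by a finite state automaton with $\pi(\mathcal{L})$ equal to the positive cone. *)

From HB Require Import structures.
From mathcomp Require Import all_boot all_algebra.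
Set Implicit Arguments. Unset Strict Implicit. Unset Printing Implicit Defensive.
Import GRing.Theory.

Record group := Group {
  carrier :> Type;
  gmul : carrier -> carrier -> carrier;
  gone : carrier;
  ginv : carrier -> carrier;
  gmulA : forall x y z, gmul x (gmul y z) = gmul (gmul x y) z;
  gmul1 : forall x, gmul gone x = x;
  gmulV : forall x, gmul (ginv x) x = gone
}.

Arguments gmul {g} _ _.
Arguments gone {g}.
Arguments ginv {g} _.

Definition Zgroup : group :=
  @Group int (fun a b => (a + b)%R) 0%R (fun a => (- a)%R)
    (fun x y z => addrA x y z) (fun x => add0r x) (fun x => addNr x).

Definition is_hom (G H : group) (f : G -> H) : Prop :=
  forall x y, f (gmul x y) = gmul (f x) (f y).

Definition is_pos_cone (G : group) (S P : G -> Prop) : Prop :=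
  (forall x, P x -> S x) /\
  (forall x y, P x -> P y -> P (gmul x y)) /\
  (forall x, S x -> P x \/ P (ginv x) \/ x = gone) /\
  (forall x, ~ (P x /\ P (ginv x))) /\
  (forall x, P x -> x <> gone) /\
  (forall x, P (ginv x) -> x <> gone).

Inductive generated (G : group) (I : Type) (s : I -> G) : G -> Prop :=
| gen_one : generated s gone
| gen_gen : forall i, generated s (s i)
| gen_mul : forall x y, generated s x -> generated s y -> generated s (gmul x y)
| gen_inv : forall x, generated s x -> generated s (ginv x).

Definition fin_gen_sub (G : group) (S : G -> Prop) : Prop :=
  exists (I : finType) (s : I -> G), forall x, S x <-> generated s x.

Definition fin_gen (G : group) : Prop := fin_gen_sub (fun _ : G => True).

Record dfa (X : finType) := Dfa {
  dfa_state : finType;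
  dfa_start : dfa_state;
  dfa_delta : dfa_state -> X -> dfa_state;
  dfa_accept : pred dfa_state
}.

Definition dfa_accepts (X : finType) (A : dfa X) (w : seq X) : bool :=
  @dfa_accept X A (foldl (@dfa_delta X A) (@dfa_start X A) w).

Definition is_monoid_hom (X : finType) (G : group) (pi : seq X -> G) : Prop :=
  pi [::] = gone /\ forall u v, pi (u ++ v) = gmul (pi u) (pi v).

Definition regular_cone (G : group) (P : G -> Prop) : Prop :=
  fin_gen G /\
  exists (X : finType) (pi : seq X -> G) (A : dfa X),
    is_monoid_hom pi /\ (forall g, exists w, pi w = g) /\
    (forall g, P g <-> exists w, dfa_accepts A w /\ pi w = g).

(* Let A be an automaton for the positive cone P = f^-1(P_Z) ∪ P_N, over words w
   evaluated as pi w in G.  If two prefixes a, a' lead to the same state and both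
   extend to accepted words of level f = 0, then swapping their suffixes gives
   accepted words of levels f(a) - f(a') and f(a') - f(a), which both lie in
   P_Z ∪ {0}; hence the level of such a prefix depends only on its state.
   Choosing one such prefix r_q per state q, every accepted word of level 0
   telescopes into a product of r_start^-1, of the finitely many elements
   r_q x r_(qx)^-1 lying in N, and of an r_q lying in N.  So P_N, and with it
   N = P_N ⊔ P_N^-1 ⊔ {1}, is finitely generated. *)
From mathcomp Require Import all_boot all_algebra.
From mathcomp Require Import zify.
From Stdlib Require Import ClassicalEpsilon.
Set Implicit Arguments. Unset Strict Implicit. Unset Printing Implicit Defensive.
Local Open Scope ring_scope.

Section GroupFacts.
Variable G : group.
Implicit Types x y : G.

Lemma gmul_idem_eq1 y : gmul y y = y -> y = gone.
Proof.
move=> yy; have : gmul (ginv y) (gmul y y) = gmul (ginv y) y by rewrite yy.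
by rewrite gmulA gmulV gmul1.
Qed.

Lemma gmulVr x : gmul x (ginv x) = gone.
Proof.
by apply: gmul_idem_eq1; rewrite -gmulA (gmulA (ginv x) x) gmulV gmul1.
Qed.

Lemma gmulr1 x : gmul x gone = x.
Proof. by rewrite -(gmulV x) gmulA gmulVr gmul1. Qed.

Lemma gmul_eq1_inv x y : gmul x y = gone -> x = ginv y.
Proof. by move=> xy; rewrite -(gmulr1 x) -(gmulVr y) gmulA xy gmul1. Qed.

Lemma ginvK x : ginv (ginv x) = x.
Proof. by apply/esym/gmul_eq1_inv; rewrite gmulVr. Qed.

Lemma ginv1 : ginv (gone : G) = gone.
Proof. by rewrite -[ginv _]gmul1 gmulVr. Qed.

Lemma generated_of_cone (I : Type) (s : I -> G) (S P : G -> Prop) :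
  (forall x, S x -> P x \/ P (ginv x) \/ x = gone) ->
  (forall x, P x -> generated s x) -> forall x, S x -> generated s x.
Proof.
move=> split_S gen_P x /split_S [/gen_P //|[/gen_P/gen_inv|->]].
  by rewrite ginvK.
exact: gen_one.
Qed.

Lemma cone_or1_antisym (P : G -> Prop) x :
  (forall y, ~ (P y /\ P (ginv y))) ->
  P x \/ x = gone -> P (ginv x) \/ ginv x = gone -> x = gone.
Proof.
move=> asymP [Px|->] [PVx|Vx1] //.
- by case: (asymP x).
- by rewrite -(ginvK x) Vx1 ginv1.
Qed.

End GroupFacts.

Section Homomorphisms.
Variables (G H : group) (f : G -> H).
Hypothesis hf : is_hom f.

Lemma hom1 : f gone = gone.
Proof. by apply: gmul_idem_eq1; rewrite -hf gmul1. Qed.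

Lemma homV x : f (ginv x) = ginv (f x).
Proof. by apply: gmul_eq1_inv; rewrite -hf gmulV hom1. Qed.

End Homomorphisms.

Section AutomatonLevels.
Variables (G : group) (f : G -> Zgroup) (X : finType) (A : dfa X) (pi : seq X -> G).
Variable PZ : Zgroup -> Prop.
Hypothesis hf : is_hom f.
Hypothesis pi_hom : is_monoid_hom pi.
Hypothesis asymZ : forall n, ~ (PZ n /\ PZ (ginv n)).
Hypothesis level_accepted :
  forall w, dfa_accepts A w -> PZ (f (pi w)) \/ f (pi w) = gone.

Definition run (a : seq X) : dfa_state A := foldl (@dfa_delta X A) (@dfa_start X A) a.

Lemma run_rcons a x : run (a ++ [:: x]) = dfa_delta (run a) x.
Proof. by rewrite /run foldl_cat. Qed.

Lemma accepts_run_eq a a' c :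
  run a = run a' -> dfa_accepts A (a' ++ c) -> dfa_accepts A (a ++ c).
Proof. by rewrite /dfa_accepts !foldl_cat /run => ->. Qed.

Lemma level_cat u v : f (pi (u ++ v)) = f (pi u) + f (pi v) :> int.
Proof. by case: pi_hom => _ piM; rewrite piM hf. Qed.

Definition completable (a : seq X) : Prop :=
  exists c, dfa_accepts A (a ++ c) /\ f (pi (a ++ c)) = 0 :> int.

Lemma completable_level_eq a a' : run a = run a' ->
  completable a -> completable a' -> f (pi a) = f (pi a') :> int.
Proof.
move=> run_aa' [c [acc_c lvl_c]] [c' [acc_c' lvl_c']].
have := level_accepted (accepts_run_eq run_aa' acc_c').
have := level_accepted (accepts_run_eq (esym run_aa') acc_c).
rewrite !level_cat in lvl_c lvl_c' * => lvl1 lvl2.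
have d_eq0 : f (pi a) - f (pi a') = 0 :> int.
  apply: (cone_or1_antisym asymZ); rewrite /=.
    by have -> : f (pi a) - f (pi a') = f (pi a) + f (pi c') :> int by lia.
  by have -> : - (f (pi a) - f (pi a')) = f (pi a') + f (pi c) :> int by lia.
lia.
Qed.

(* On a state reached by no completable prefix, [rep] is an arbitrary word. *)
Definition rep (q : dfa_state A) : seq X :=
  epsilon (inhabits [::]) (fun a => run a = q /\ completable a).

Definition rep_elt (q : dfa_state A) : G := pi (rep q).

Lemma level_rep_elt a : completable a -> f (rep_elt (run a)) = f (pi a) :> int.
Proof.
move=> comp_a.
have [run_rep comp_rep] := epsilon_spec (inhabits [::])
  (fun a' => run a' = run a /\ completable a') (ex_intro _ a (conj erefl comp_a)).
exact: completable_level_eq.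
Qed.

Definition kernel_part (g : G) : G := if f g == 0 :> int then g else gone.

Definition candidate (i : (dfa_state A * X) + dfa_state A) : G :=
  match i with
  | inl (q, x) => gmul (gmul (rep_elt q) (pi [:: x])) (ginv (rep_elt (dfa_delta q x)))
  | inr q => rep_elt q
  end.

Definition gens i : G := kernel_part (candidate i).

Lemma generated_level0 g : generated gens g -> f g = 0 :> int.
Proof.
elim=> [|i|x y _ lvl_x _ lvl_y|x _ lvl_x]; rewrite ?hf ?(homV hf) ?hom1 //=.
- rewrite /gens /kernel_part; case: ifP => [/eqP //|_]; exact: (hom1 hf).
- by rewrite lvl_x lvl_y.
- by rewrite lvl_x.
Qed.

Lemma generated_candidate i :
  f (candidate i) = 0 :> int -> generated gens (candidate i).
Proof.
by move=> lvl_i; have := gen_gen gens i; rewrite /gens /kernel_part lvl_i eqxx.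
Qed.

Lemma generated_telescope w a : dfa_accepts A (a ++ w) ->
  f (pi (a ++ w)) = 0 :> int -> generated gens (gmul (rep_elt (run a)) (pi w)).
Proof.
case: pi_hom => pi0 piM.
elim: w a => [|x w IHw] a acc_aw lvl_aw.
  rewrite cats0 in acc_aw lvl_aw; rewrite pi0 gmulr1.
  apply: (generated_candidate (i := inr (run a))).
  by rewrite level_rep_elt //; exists [::]; rewrite cats0.
have cat_ax : a ++ x :: w = (a ++ [:: x]) ++ w by rewrite -catA.
rewrite cat_ax in acc_aw lvl_aw.
have comp_a : completable a by exists (x :: w); rewrite cat_ax.
have comp_ax : completable (a ++ [:: x]) by exists w.
have gen_step : generated gens (candidate (inl (run a, x))).
  apply: generated_candidate.
  by rewrite /= !hf (homV hf) /= -run_rcons !level_rep_elt // level_cat; lia.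
have := gen_mul gen_step (IHw _ acc_aw lvl_aw).
by rewrite /= -run_rcons -gmulA (gmulA (ginv _)) gmulV gmul1 -gmulA -piM.
Qed.

Lemma generated_accepted w : dfa_accepts A w ->
  f (pi w) = 0 :> int -> generated gens (pi w).
Proof.
case: pi_hom => pi0 _ acc_w lvl_w.
have comp_nil : completable [::] by exists w.
have gen_start : generated gens (rep_elt (run [::])).
  by apply: (generated_candidate (i := inr _)); rewrite level_rep_elt // pi0 hom1.
have := gen_mul (gen_inv gen_start) (generated_telescope (a := [::]) acc_w lvl_w).
by rewrite gmulA gmulV gmul1.
Qed.

End AutomatonLevels.

Theorem lemma3p11 (G : group) (f : G -> Zgroup) :
  is_hom f -> (forall n : Zgroup, exists g, f g = n) ->
  ~ fin_gen_sub (fun g : G => f g = gone) ->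
  forall (PZ : Zgroup -> Prop) (PN : G -> Prop),
    is_pos_cone (fun _ : Zgroup => True) PZ ->
    is_pos_cone (fun g : G => f g = gone) PN ->
    ~ regular_cone (fun g : G => PZ (f g) \/ PN g).
Proof.
move=> hf _ ker_not_fg PZ PN [_ [_ [_ [asymZ _]]]] [PN_ker [_ [split_ker _]]]
  [_ [X [pi [A [pi_hom [_ cone_lang]]]]]].
have level_accepted w : dfa_accepts A w -> PZ (f (pi w)) \/ f (pi w) = gone.
  move=> acc_w; have [|/PN_ker] := (cone_lang (pi w)).2 (ex_intro _ w (conj acc_w erefl)).
  - by left.
  - by right.
apply: ker_not_fg; exists ((dfa_state A * X) + dfa_state A)%type, (gens f pi).
move=> g; split; last exact: generated_level0.
apply: generated_of_cone split_ker _ g => h PN_h.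
have [w [acc_w w_h]] := (cone_lang h).1 (or_intror PN_h); subst h.
exact: (generated_accepted hf pi_hom asymZ level_accepted acc_w (PN_ker _ PN_h)).
Qed.
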